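(* Let $G^\sigma$ be a connected oriented unicyclic graph of order $n$ with girth $k$, where $n>k$. Then $sr(G^\sigma)\geq k$ if $k$ is even and $sr(G^\sigma)\geq k+1$ if $k$ is odd. This bound is sharp (it is attained, e.g., by every orientation of the graph obtained from $C_k$ by attaching $n-k$ pendant edges at one vertex of $C_k$).
   Context: An oriented graph $G^\sigma$ is a simple graph $G$ together with an orientation of each edge. Its skew-adjacency matrix $S(G^\sigma)=(s_{ij})$ has $s_{ij}=1$ if there is an arc from $v_i$ to $v_j$, $s_{ij}=-1$ if there is an arc from $v_j$ to $v_i$, and $0$ otherwise; the skew-rank $sr(G^\sigma)$ is the rank of $S(G^\sigma)$. A unicyclic graph is a connected graph with exactly one cycle; its girth is the length of that cycle. *)

From mathcomp Require Import all_boot all_order all_algebra.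
Set Implicit Arguments. Unset Strict Implicit. Unset Printing Implicit Defensive.
Import GRing.Theory Num.Theory.

Definition oriented (n : nat) (arc : rel 'I_n) : Prop :=
  irreflexive arc /\ (forall i j, arc i j -> ~~ arc j i).

Definition underlying (n : nat) (arc : rel 'I_n) : rel 'I_n :=
  fun i j => arc i j || arc j i.

Definition skew_adj (n : nat) (arc : rel 'I_n) : 'M[rat]_n :=
  \matrix_(i, j) (if arc i j then 1 else if arc j i then -1 else 0)%R.

Definition skew_rank (n : nat) (arc : rel 'I_n) : nat := \rank (skew_adj arc).

Definition is_cycle (n : nat) (adj : rel 'I_n) (s : seq 'I_n) : Prop :=
  [/\ 3 <= size s, uniq s & cycle adj s].

Definition cycle_edges (n : nat) (s : seq 'I_n) : {set {set 'I_n}} :=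
  [set [set p.1; p.2] | p in zip s (rot 1 s)].

Definition connected (n : nat) (adj : rel 'I_n) : Prop :=
  forall x y, connect adj x y.

Definition unicyclic (n : nat) (adj : rel 'I_n) : Prop :=
  connected adj /\
  exists s, is_cycle adj s /\
    forall t, is_cycle adj t -> cycle_edges t = cycle_edges s.

(* Girth k: there is a cycle of length k (for a unicyclic graph, the cycle). *)
Definition has_girth (n : nat) (adj : rel 'I_n) (k : nat) : Prop :=
  exists s, is_cycle adj s /\ size s = k.

(* The graph obtained from C_k (on vertices 0..k-1) by attaching the n-k
   pendant vertices k..n-1 at vertex 0 of C_k. *)
Definition cycle_with_pendants (n k : nat) : rel 'I_n :=
  fun i j =>
    [|| [&& val i < k, val j < k &
           (val j == (val i).+1 %% k) || (val i == (val j).+1 %% k)],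
        (val i == 0) && (k <= val j)
      | (val j == 0) && (k <= val i)].
Arguments cycle_with_pendants : clear implicits.

From mathcomp Require Import all_boot all_order all_algebra zify.
Set Implicit Arguments. Unset Strict Implicit. Unset Printing Implicit Defensive.
Import GRing.Theory Num.Theory.

(* A unicyclic graph other than its cycle C_k has a vertex v off the cycle
   adjacent to a cycle vertex.  Since the cycle is the only one, C_k has no
   chord and v has no second neighbour on it, so v followed by the k cycle
   vertices is an induced path plus the single closing edge between its second
   and last vertices.  The first k (k even) or all k+1 (k odd) of these
   vertices index a triangular submatrix of S with nonzero diagonal, which
   gives the lower bound.  For C_k with pendants at vertex 0, the even cycle
   vertices form a vertex cover of size uphalf k, and the rows and columns they
   index carry every nonzero entry of S, which gives the matching upper
   bound. *)

Section RankBounds.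
Variable F : fieldType.
Local Open Scope ring_scope.

Lemma mxrank_ge_triangular n m (A : 'M[F]_n) (r c : 'I_m -> 'I_n) :
  (forall i j : 'I_m, (i < j)%N -> A (r i) (c j) = 0) ->
  (forall i, A (r i) (c i) != 0) -> (m <= \rank A)%N.
Proof.
move=> upper diag; set B := \matrix_(i, j) A (r i) (c j).
have rankB : \rank B = m.
  apply: mxrank_unit; rewrite unitmxE det_trig; last first.
    by apply/is_trig_mxP => i j lt_ij; rewrite mxE upper.
  by rewrite unitfE; apply/prodf_neq0 => i _; rewrite mxE.
rewrite -rankB (_ : B = (rowsub c (rowsub r A)^T)^T); last first.
  by apply/matrixP => i j; rewrite !mxE.
rewrite mxrank_tr (leq_trans (mxrankS (rowsub_sub _ _))) //.
by rewrite mxrank_tr mxrankS ?rowsub_sub.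
Qed.

Lemma mxrank_le_row_support n q p (A : 'M[F]_(n, q)) (e : 'I_p -> 'I_n) :
  (forall i j, A i j != 0 -> i \in codom e) -> (\rank A <= p)%N.
Proof.
move=> supp; suff /mxrankS/leq_trans : (A <= rowsub e A)%MS by apply; exact: rank_leq_row.
apply/row_subP => i; case: (boolP [exists j, A i j != 0]).
  case/existsP => j /supp /codomP [t ->].
  by rewrite -row_rowsub row_sub.
move/existsPn => zero; rewrite (_ : row i A = 0) ?sub0mx //.
by apply/rowP => j; rewrite !mxE; apply/eqP; rewrite -[_ == _]negbK zero.
Qed.

Lemma mxrank_le_cover n (A : 'M[F]_n) p q (er : 'I_p -> 'I_n) (ec : 'I_q -> 'I_n) :
  (forall i j, A i j != 0 -> (i \in codom er) || (j \in codom ec)) ->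
  (\rank A <= p + q)%N.
Proof.
move=> cover; pose Ar := \matrix_(i, j) if i \in codom er then A i j else 0.
rewrite -(subrK Ar A); apply: leq_trans (mxrank_add _ _) _.
rewrite [(p + q)%N]addnC leq_add //.
  rewrite -mxrank_tr; apply: (mxrank_le_row_support (e := ec)) => j i; rewrite !mxE.
  case: ifP => [_|not_er]; first by rewrite subrr eqxx.
  by rewrite subr0 => /cover; rewrite not_er.
by apply: (mxrank_le_row_support (e := er)) => i j; rewrite mxE; case: ifP; rewrite ?eqxx.
Qed.

(* Rows y_0, y_2, ..., y_(2h-2), y_(2h-1), ..., y_3, y_1 against columns
   y_1, y_3, ..., y_(2h-1), y_(2h-2), ..., y_2, y_0 give a triangular
   submatrix whose diagonal runs along the path; edges joining two odd
   indices only meet its lower part. *)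
Lemma mxrank_ge_path_matching n (A : 'M[F]_n) h (y : nat -> 'I_n) :
  (forall a, (a.+1 < h.*2)%N -> A (y a) (y a.+1) != 0 /\ A (y a.+1) (y a) != 0) ->
  (forall a b, (a < h.*2)%N -> (b < h.*2)%N -> A (y a) (y b) != 0 ->
     [|| a == b.+1, b == a.+1 | odd a && odd b]) ->
  (h.*2 <= \rank A)%N.
Proof.
move=> path_nz only_path.
pose fr i := (if i < h then 2 * i else h.*2 - 1 - 2 * (i - h))%N.
pose fc i := (if i < h then 2 * i + 1 else h.*2 - 2 - 2 * (i - h))%N.
apply: (@mxrank_ge_triangular _ _ _ (fun i : 'I_h.*2 => y (fr i))
                                    (fun i : 'I_h.*2 => y (fc i))).
- move=> i j lt_ij; apply/eqP; apply: contraTT isT => nz.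
  have := ltn_ord i; have := ltn_ord j.
  have := only_path _ _ _ _ nz; rewrite /fr /fc.
  by case: (ltnP i h); case: (ltnP j h) => *; lia.
- move=> i; have lt_i := ltn_ord i; rewrite /fr /fc; case: (ltnP i h) => hi.
    by rewrite addn1; case: (path_nz (2 * i)%N) => //; lia.
  have -> : (h.*2 - 1 - 2 * (i - h) = (h.*2 - 2 - 2 * (i - h)).+1)%N by lia.
  by case: (path_nz (h.*2 - 2 - 2 * (i - h))%N) => //; lia.
Qed.

End RankBounds.

Lemma skew_adj_neq0 n (arc : rel 'I_n) i j :
  (skew_adj arc i j != 0%R) = underlying arc i j.
Proof.
rewrite /skew_adj mxE /underlying.
by case: (arc i j); case: (arc j i); rewrite ?oppr_eq0 ?oner_eq0 ?eqxx.
Qed.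

Lemma underlying_sym n (arc : rel 'I_n) : symmetric (underlying arc).
Proof. by move=> i j; rewrite /underlying orbC. Qed.

(* [y 0] is the pendant vertex and [y 1], ..., [y k] run around the cycle. *)
Lemma skew_rank_ge_tadpole n (arc : rel 'I_n) k (y : nat -> 'I_n) :
  irreflexive arc ->
  (forall a, a < k -> underlying arc (y a) (y a.+1)) ->
  (forall a b, a < b <= k -> underlying arc (y a) (y b) ->
     b = a.+1 \/ (a = 1 /\ b = k)) ->
  (if odd k then k.+1 else k) <= skew_rank arc.
Proof.
move=> irr path_k only_path; have uphalf_k := uphalfK k.
have -> : (if odd k then k.+1 else k) = (uphalf k).*2 by case: ifP; lia.
apply: (mxrank_ge_path_matching (y := y)) => [a a_lt | a b a_lt b_lt].
  have edge : underlying arc (y a) (y a.+1) by apply: path_k; lia.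
  by rewrite !skew_adj_neq0 edge underlying_sym edge.
rewrite skew_adj_neq0; case: (ltngtP a b) => [lt_ab | lt_ba | ->] edge.
- by have [|eb|[ea eb]] := only_path a b _ edge; lia.
- rewrite underlying_sym in edge.
  by have [|ea|[eb ea]] := only_path b a _ edge; lia.
- by rewrite /underlying irr in edge.
Qed.

Lemma cycle_zip_rot (T : eqType) (e : rel T) (c : seq T) x y :
  cycle e c -> (x, y) \in zip c (rot 1 c) -> e x y.
Proof.
case: c => // z c; rewrite rot1_cons /=.
elim: c z {1 3}z => [|u c IHc] z w /=.
  by rewrite andbT mem_seq1 => ezw /eqP[-> ->].
by rewrite in_cons => /andP[ezu path_u] /orP[/eqP[-> ->] // | /IHc]; apply.
Qed.

Lemma modn_succ_cases a k : a < k ->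
  (a.+1 < k /\ a.+1 %% k = a.+1) \/ (a.+1 = k /\ a.+1 %% k = 0).
Proof.
rewrite leq_eqVlt => /predU1P[<- | lt_a]; first by right; rewrite modnn.
by left; rewrite modn_small.
Qed.

Lemma next_nth_mod (T : eqType) (s : seq T) x0 i : uniq s -> i < size s ->
  next s (nth x0 s i) = nth x0 s (i.+1 %% size s).
Proof.
move=> s_uniq lt_i; rewrite next_nth mem_nth // index_uniq //.
case: s s_uniq lt_i => [//|z c] _ /=; rewrite ltnS leq_eqVlt => /predU1P[-> | lt_i].
  by rewrite modnn nth_default.
by rewrite modn_small //= (set_nth_default x0).
Qed.

Lemma is_cycle_rot n (adj : rel 'I_n) i s : is_cycle adj (rot i s) = is_cycle adj s.
Proof. by rewrite /is_cycle size_rot rot_uniq rot_cycle. Qed.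

Lemma cycle_edges_last n (x : 'I_n) p : [set last x p; x] \in cycle_edges (x :: p).
Proof.
apply/imsetP; exists (last x p, x) => //.
by rewrite rot1_cons {1}lastI zip_rcons ?size_belast // mem_rcons mem_head.
Qed.

Section UniqueCycle.
Variables (n : nat) (adj : rel 'I_n) (s : seq 'I_n).
Hypotheses (adj_sym : symmetric adj) (adj_irr : irreflexive adj).
Hypothesis s_cycle : is_cycle adj s.
Hypothesis s_unique : forall t, is_cycle adj t -> cycle_edges t = cycle_edges s.

Let s_uniq : uniq s. Proof. by case: s_cycle. Qed.

Lemma cycle_edges_next e : e \in cycle_edges s ->
  exists2 x, x \in s & e = [set x; next s x].
Proof.
case/imsetP => [[x y] xy_in ->] /=; exists x.
  by rewrite -[s](unzip1_zip (s := s) (t := rot 1 s)) ?size_rot // (map_f fst xy_in).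
by rewrite (eqP (cycle_zip_rot (cycle_next s_uniq) xy_in)).
Qed.

Lemma unique_cycle_closing x p : is_cycle adj (x :: p) ->
  exists2 w, w \in s & [set last x p; x] = [set w; next s w].
Proof.
by move=> /s_unique t_edges; apply: cycle_edges_next; rewrite -t_edges cycle_edges_last.
Qed.

Lemma unique_cycle_arc x y : x \in s -> y \in s -> x != y ->
  exists2 p, [/\ path adj x p, last x p = y, uniq (x :: p) & {subset p <= s}]
           & head x p = next s x.
Proof.
move=> x_in y_in x_neq_y; case: (rot_to x_in) => i c rot_s.
have [_ c_uniq c_cycle] : is_cycle adj (x :: c) by rewrite -rot_s is_cycle_rot.
have y_in_c : y \in c.
  by move: y_in; rewrite -(mem_rot i) rot_s in_cons eq_sym (negPf x_neq_y).
have lt_y : index y c < size c by rewrite index_mem.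
exists (take (index y c).+1 c); first split.
- by move: c_cycle; rewrite /= rcons_path => /andP[path_c _]; apply: take_path.
- by rewrite (take_nth x) // last_rcons nth_index.
- exact: take_uniq (index y c).+2 c_uniq.
- by move=> z /mem_take z_in; rewrite -(mem_rot i) rot_s in_cons z_in orbT.
- rewrite -(next_rot i s_uniq) rot_s next_nth mem_head /= eqxx.
  by case: (c) lt_y.
Qed.

Lemma unique_cycle_chord x y : x \in s -> y \in s -> adj x y ->
  y = next s x \/ x = next s y.
Proof.
move=> x_in y_in xy; have x_neq_y : x != y by apply: contraTneq xy => ->; rewrite adj_irr.
have [p [path_p last_p p_uniq _] head_p] := unique_cycle_arc x_in y_in x_neq_y.
have [short | long] := ltnP (size p) 2.
  case: p short path_p last_p head_p p_uniq => [|z [|//]] _ _ /=.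
    by move=> y_eq; rewrite y_eq eqxx in x_neq_y.
  by move=> <- -> _; left.
have cyc : is_cycle adj (x :: p).
  by split=> //; rewrite (cycle_path x) /= path_p last_p adj_sym xy.
have [w _] := unique_cycle_closing cyc; rewrite last_p => edge.
have /set2P yw : y \in [set w; next s w] by rewrite -edge set21.
have /set2P xw : x \in [set w; next s w] by rewrite -edge set22.
move: x_neq_y; case: yw xw => [] -> [] ->; rewrite ?eqxx // => _; by [left | right].
Qed.

Lemma unique_cycle_attachment v x y : v \notin s -> x \in s -> y \in s ->
  adj v x -> adj v y -> x = y.
Proof.
move=> v_out x_in y_in vx vy; case: (eqVneq x y) => // x_neq_y.
have [p [path_p last_p p_uniq p_sub] _] := unique_cycle_arc x_in y_in x_neq_y.
have cyc : is_cycle adj (v :: x :: p).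
  split.
  - by case: p last_p {path_p p_uniq p_sub} => [/= y_eq|//]; rewrite y_eq eqxx in x_neq_y.
  - rewrite cons_uniq p_uniq in_cons negb_or andbT; apply/andP; split.
      by apply: contraNneq v_out => ->.
    by apply: contra v_out => /p_sub.
  - by rewrite /= vx rcons_path path_p last_p adj_sym vy.
have [w w_in edge] := unique_cycle_closing cyc.
have /set2P [] : v \in [set w; next s w] by rewrite -edge set22.
  by move=> v_eq; rewrite v_eq w_in in v_out.
by move=> v_eq; rewrite v_eq mem_next w_in in v_out.
Qed.

Lemma unique_cycle_chord_nth x0 a b : a < b < size s ->
  adj (nth x0 s a) (nth x0 s b) -> b = a.+1 \/ (a = 0 /\ b.+1 = size s).
Proof.
case/andP=> lt_ab lt_b; have lt_a := ltn_trans lt_ab lt_b.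
have mod_lt m : m %% size s < size s by rewrite ltn_pmod // (leq_ltn_trans _ lt_b).
case/unique_cycle_chord; rewrite ?mem_nth // !next_nth_mod // => /eqP.
  rewrite nth_uniq // => /eqP b_eq.
  by have [[_ a_mod]|[_ a_mod]] := modn_succ_cases lt_a; rewrite a_mod in b_eq; lia.
rewrite nth_uniq // => /eqP a_eq.
by have [[_ b_mod]|[b_last b_mod]] := modn_succ_cases lt_b; rewrite b_mod in a_eq; lia.
Qed.

End UniqueCycle.

Lemma connected_edge_out n (adj : rel 'I_n) (s : seq 'I_n) :
  connected adj -> size s < n -> s != [::] ->
  exists2 v, v \notin s & exists2 b, b \in s & adj v b.
Proof.
move=> conn lt_s; case: s lt_s => // b0 s lt_s _.
have [w w_out] : exists w, w \notin b0 :: s.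
  case: (pickP (fun w => w \notin b0 :: s)) => [w|all_in]; first by exists w.
  have : size (enum 'I_n) <= size (b0 :: s).
    by apply: uniq_leq_size (enum_uniq _) _ => w _; have /negbFE := all_in w.
  by rewrite size_enum_ord leqNgt lt_s.
case/connectP: (conn w b0) => p; elim: p w w_out => [|a p IHp] w w_out /=.
  by move=> _ w_eq; rewrite w_eq mem_head in w_out.
case/andP=> wa path_a last_p; case: (boolP (a \in b0 :: s)) => [a_in | a_out].
  by exists w => //; exists a.
exact: IHp a_out path_a last_p.
Qed.

Lemma skew_rank_ge_unicyclic n (arc : rel 'I_n) k :
  oriented arc -> unicyclic (underlying arc) -> has_girth (underlying arc) k ->
  k < n -> (if odd k then k.+1 else k) <= skew_rank arc.
Proof.
move=> [arc_irr _] [conn [s0 [s0_cycle s0_unique]]] [s [s_cycle size_s]] lt_kn.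
set adj := underlying arc.
have adj_sym : symmetric adj := @underlying_sym n arc.
have adj_irr : irreflexive adj by move=> i; rewrite /adj /underlying arc_irr.
have [v v_out [b b_in vb]] : exists2 v, v \notin s & exists2 b, b \in s & adj v b.
  by apply: connected_edge_out conn _ _; [rewrite size_s | case: s_cycle; case: (s)].
case: (rot_to b_in) => i c rot_s.
have c_cycle : is_cycle adj (b :: c) by rewrite -rot_s is_cycle_rot.
have c_unique t : is_cycle adj t -> cycle_edges t = cycle_edges (b :: c).
  by move=> /s0_unique ->; rewrite (s0_unique _ c_cycle).
have size_c : size (b :: c) = k by rewrite -rot_s size_rot.
have c_uniq : uniq (b :: c) by case: c_cycle.
have v_out_c : v \notin b :: c by rewrite -rot_s mem_rot.
apply: (skew_rank_ge_tadpole
          (y := fun a => if a is a'.+1 then nth b (b :: c) a' else v)) => //.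
  case=> [|a] lt_a //; have [_ _ path_c] := c_cycle.
  have lt_a' : a < size (b :: c) by rewrite size_c; lia.
  have := next_cycle path_c (mem_nth b lt_a').
  by rewrite next_nth_mod // modn_small // size_c.
case=> [|a] [|a'] //=.
  move=> lt_a' v_nth; have lt_a'c : a' < size (b :: c) by rewrite size_c.
  have := unique_cycle_attachment adj_sym c_cycle c_unique v_out_c
            (mem_head b c) (mem_nth b lt_a'c) vb v_nth.
  rewrite -[b in b = _]/(nth b (b :: c) 0) => /eqP.
  by rewrite nth_uniq // => /eqP <-; left.
move=> /andP[lt_aa' le_a'] edge.
have lt_aa'c : a < a' < size (b :: c) by rewrite size_c; lia.
have := unique_cycle_chord_nth adj_sym adj_irr c_cycle c_unique lt_aa'c edge.
by rewrite size_c; lia.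
Qed.

Lemma cycle_with_pendants_cover n k (i j : 'I_n) : 0 < k ->
  cycle_with_pendants n k i j -> (i < k) && ~~ odd i || (j < k) && ~~ odd j.
Proof.
move=> k_gt0; rewrite /cycle_with_pendants /=.
case/or3P => [/and3P[lt_i lt_j /orP[] /eqP ji] | /andP[/eqP-> _] | /andP[/eqP-> _]].
- by have [[_ i_mod]|[_ i_mod]] := modn_succ_cases lt_i; rewrite i_mod in ji; lia.
- by have [[_ j_mod]|[_ j_mod]] := modn_succ_cases lt_j; rewrite j_mod in ji; lia.
- by rewrite k_gt0.
- by rewrite k_gt0 orbT.
Qed.

Lemma skew_rank_cycle_with_pendants n k (arc : rel 'I_n) :
  3 <= k -> k < n -> oriented arc ->
  (forall i j, underlying arc i j = cycle_with_pendants n k i j) ->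
  skew_rank arc = (if odd k then k.+1 else k).
Proof.
case: n arc => [|n] arc // k3 lt_kn [arc_irr _] graph; have k_gt0 : 0 < k by lia.
have vertexK a : a <= k -> nat_of_ord (inord a : 'I_n.+1) = a.
  by move=> le_a; rewrite inordK //; lia.
apply/eqP; rewrite eqn_leq; apply/andP; split.
  pose even_vertex (t : 'I_(uphalf k)) : 'I_n.+1 := inord t.*2.
  have even_vertexP (i : 'I_n.+1) : i < k -> ~~ odd i -> i \in codom even_vertex.
    move=> lt_i even_i; apply/codomP; have lt_half : i./2 < uphalf k by lia.
    by exists (Ordinal lt_half); apply: val_inj; rewrite /= vertexK /=; lia.
  have -> : (if odd k then k.+1 else k) = uphalf k + uphalf k by case: ifP; lia.
  apply: (mxrank_le_cover (er := even_vertex) (ec := even_vertex)) => i j.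
  rewrite skew_adj_neq0 graph => /(cycle_with_pendants_cover k_gt0)/orP[].
  + by case/andP=> lt_i /(even_vertexP _ lt_i) ->.
  + by case/andP=> lt_j /(even_vertexP _ lt_j) ->; rewrite orbT.
apply: (skew_rank_ge_tadpole (y := fun a => inord (if a is a'.+1 then a' else k))) => //.
  case=> [|a] lt_a; rewrite graph /cycle_with_pendants /= !vertexK //; try lia.
  by rewrite modn_small ?eqxx ?lt_a ?(ltnW lt_a).
case=> [|a] [|b] //=.
  by move=> lt_b; rewrite graph /cycle_with_pendants /= !vertexK; lia.
move=> /andP[lt_ab le_b]; rewrite graph /cycle_with_pendants /= !vertexK; try lia.
case/or3P => [/and3P[lt_a lt_b /orP[] /eqP] | /andP[/eqP] | /andP[/eqP]]; try lia.
  by have [[_ ->]|[_ ->]] := modn_succ_cases lt_a; lia.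
by have [[_ ->]|[b_last ->]] := modn_succ_cases lt_b; lia.
Qed.

Theorem theorem4p3 :
  (forall (n : nat) (arc : rel 'I_n) (k : nat),
      oriented arc -> unicyclic (underlying arc) ->
      has_girth (underlying arc) k -> k < n ->
      (if odd k then k.+1 else k) <= skew_rank arc)
  /\
  (forall (n k : nat) (arc : rel 'I_n),
      3 <= k -> k < n ->
      oriented arc ->
      (forall i j, underlying arc i j = cycle_with_pendants n k i j) ->
      skew_rank arc = (if odd k then k.+1 else k)).
Proof.
split=> [n arc k | n k arc]; first exact: skew_rank_ge_unicyclic.
exact: skew_rank_cycle_with_pendants.
Qed.
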